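(* Let $\xi>0$ be such that $D_{\xi}:=D^TD-\xi^2 I$ is nonsingular. Then for every $\omega\geq 0$, the matrix $G(j\omega)$ has a singular value equal to $\xi$ if and only if $\lambda=j\omega$ is an eigenvalue of the linear operator $\mathcal{L}_{\xi}$, i.e. there exists $u\in\mathcal{D}(\mathcal{L}_{\xi})$, $u\neq 0$, with $\mathcal{L}_{\xi}u=j\omega\, u$.
   Context: Let $n,m,n_u,n_y$ be positive integers, $A_0,\dots,A_m\in\mathbb{R}^{n\times n}$, $B\in\mathbb{R}^{n\times n_u}$, $C\in\mathbb{R}^{n_y\times n}$, $D\in\mathbb{R}^{n_y\times n_u}$, and delays $\tau_1,\dots,\tau_m\geq 0$ with $\tau_{\max}=\max_i\tau_i$. The transfer function is $G(s)=C\left(sI-A_0-\sum_{i=1}^m A_i e^{-\tau_i s}\right)^{-1}B+D$. Standing assumption: the system is stable, i.e. all solutions $s$ of $\det\left(sI-A_0-\sum_{i=1}^m A_i e^{-\tau_i s}\right)=0$ have negative real part. For $\xi>0$ put $D_\xi=D^TD-\xi^2I_{n_u}$ and $\tilde D_\xi=DD^T-\xi^2 I_{n_y}$ (for $\xi>0$ one is nonsingular iff the other is). Define the $2n\times 2n$ matrices $M_0=\begin{bmatrix} A_0-BD_\xi^{-1}D^TC & -BD_\xi^{-1}B^T\\ \xi^2 C^T\tilde D_\xi^{-1}C & -A_0^T+C^TDD_\xi^{-1}B^T\end{bmatrix}$, $M_i=\begin{bmatrix}A_i&0\\0&0\end{bmatrix}$, $M_{-i}=\begin{bmatrix}0&0\\0&-A_i^T\end{bmatrix}$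 for $1\le i\le m$. Let $X=\mathcal{C}([-\tau_{\max},\tau_{\max}],\mathbb{C}^{2n})$ (continuous functions). The operator $\mathcal{L}_\xi$ on $X$ has domain $\mathcal{D}(\mathcal{L}_\xi)=\{\phi\in X:\ \phi'\in X,\ \phi'(0)=M_0\phi(0)+\sum_{i=1}^m(M_i\phi(-\tau_i)+M_{-i}\phi(\tau_i))\}$ and acts by $\mathcal{L}_\xi\phi=\phi'$. *)

From HB Require Import structures.
From mathcomp Require Import all_boot all_order all_algebra.
From mathcomp Require Import all_classical all_reals all_analysis.
From mathcomp Require Import complex.
Set Implicit Arguments. Unset Strict Implicit. Unset Printing Implicit Defensive.
Import Order.TTheory GRing.Theory Num.Theory.
Import numFieldNormedType.Exports.
Local Open Scope ring_scope.
Local Open Scope classical_set_scope.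

Section Defs.
Variable R : realType.

Definition toC (x : R) : R[i] := Complex x 0.
Definition mxC (p q : nat) (M : 'M[R]_(p, q)) : 'M[R[i]]_(p, q) := map_mx toC M.

Definition cexp (z : R[i]) : R[i] :=
  Complex (expR (complex.Re z) * cos (complex.Im z)) (expR (complex.Re z) * sin (complex.Im z)).

Definition ctrmx (p q : nat) (M : 'M[R[i]]_(p, q)) : 'M[R[i]]_(q, p) :=
  (map_mx (@conjc R) M)^T.

Definition charmx (n m : nat) (A0 : 'M[R]_n) (A : 'I_m -> 'M[R]_n)
  (tau : 'I_m -> R) (s : R[i]) : 'M[R[i]]_n :=
  s%:M - mxC A0 - \sum_(i < m) cexp (- (toC (tau i)) * s) *: mxC (A i).

Definition transfer (n m nu ny : nat) (A0 : 'M[R]_n) (A : 'I_m -> 'M[R]_n)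
  (tau : 'I_m -> R) (B : 'M[R]_(n, nu)) (C : 'M[R]_(ny, n)) (D : 'M[R]_(ny, nu))
  (s : R[i]) : 'M[R[i]]_(ny, nu) :=
  mxC C *m invmx (charmx A0 A tau s) *m mxC B + mxC D.

Definition has_singular_value (p q : nat) (M : 'M[R[i]]_(p, q)) (sigma : R) :=
  0 <= sigma /\ eigenvalue (ctrmx M *m M) (toC (sigma ^+ 2)).

Definition tau_max (m : nat) (tau : 'I_m -> R) : R := \big[Num.max/0]_(i < m) tau i.

Definition cvRe (k : nat) (v : 'cV[R[i]]_k) : 'cV[R]_k := map_mx (@complex.Re R) v.
Definition cvIm (k : nat) (v : 'cV[R[i]]_k) : 'cV[R]_k := map_mx (@complex.Im R) v.

Definition cont_on (k : nat) (a b : R) (u : R -> 'cV[R[i]]_k) :=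
  {within `[a, b], continuous (fun t => cvRe (u t))} /\
  {within `[a, b], continuous (fun t => cvIm (u t))}.

Definition deriv_on (k : nat) (a b : R) (u u' : R -> 'cV[R[i]]_k) :=
  forall t, a <= t <= b ->
    ((fun h : R => h^-1 *: (cvRe (u (t + h)) - cvRe (u t)))
       @ within [set h | a <= t + h <= b] 0^' --> cvRe (u' t)) /\
    ((fun h : R => h^-1 *: (cvIm (u (t + h)) - cvIm (u t)))
       @ within [set h | a <= t + h <= b] 0^' --> cvIm (u' t)).

Definition Dxi (nu ny : nat) (D : 'M[R]_(ny, nu)) (xi : R) : 'M[R]_nu :=
  D^T *m D - (xi ^+ 2)%:M.
Definition tDxi (nu ny : nat) (D : 'M[R]_(ny, nu)) (xi : R) : 'M[R]_ny :=
  D *m D^T - (xi ^+ 2)%:M.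

Definition Mzero (n nu ny : nat) (A0 : 'M[R]_n) (B : 'M[R]_(n, nu))
  (C : 'M[R]_(ny, n)) (D : 'M[R]_(ny, nu)) (xi : R) : 'M[R]_(n + n) :=
  block_mx (A0 - B *m invmx (Dxi D xi) *m D^T *m C)
           (- (B *m invmx (Dxi D xi) *m B^T))
           (xi ^+ 2 *: (C^T *m invmx (tDxi D xi) *m C))
           (- A0^T + C^T *m D *m invmx (Dxi D xi) *m B^T).
Definition Mplus (n : nat) (Ai : 'M[R]_n) : 'M[R]_(n + n) :=
  block_mx Ai 0 0 0.
Definition Mminus (n : nat) (Ai : 'M[R]_n) : 'M[R]_(n + n) :=
  block_mx 0 0 0 (- Ai^T).

Definition in_dom_L (n m nu ny : nat) (A0 : 'M[R]_n) (A : 'I_m -> 'M[R]_n)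
  (tau : 'I_m -> R) (B : 'M[R]_(n, nu)) (C : 'M[R]_(ny, n)) (D : 'M[R]_(ny, nu))
  (xi : R) (phi phi' : R -> 'cV[R[i]]_(n + n)) :=
  let T := tau_max tau in
  [/\ cont_on (- T) T phi, deriv_on (- T) T phi phi', cont_on (- T) T phi' &
      phi' 0 = mxC (Mzero A0 B C D xi) *m phi 0 +
        \sum_(i < m) (mxC (Mplus (A i)) *m phi (- tau i) +
                      mxC (Mminus (A i)) *m phi (tau i))].

Definition eigenvalue_L (n m nu ny : nat) (A0 : 'M[R]_n) (A : 'I_m -> 'M[R]_n)
  (tau : 'I_m -> R) (B : 'M[R]_(n, nu)) (C : 'M[R]_(ny, n)) (D : 'M[R]_(ny, nu))
  (xi : R) (lambda : R[i]) :=
  let T := tau_max tau in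
  exists u u' : R -> 'cV[R[i]]_(n + n),
    [/\ in_dom_L A0 A tau B C D xi u u',
        (exists t, - T <= t <= T /\ u t != 0) &
        forall t, - T <= t <= T -> u' t = lambda *: u t].

End Defs.

From HB Require Import structures.
From mathcomp Require Import all_boot all_order all_algebra.
From mathcomp Require Import all_classical all_reals all_analysis.
From mathcomp Require Import complex.
From mathcomp Require Import ring lra.
Import Order.TTheory GRing.Theory Num.Theory.
Import numFieldNormedType.Exports.
Local Open Scope ring_scope.
Local Open Scope classical_set_scope.

(* On the imaginary axis the eigenvalue problem for [L_xi] is finite dimensional.
   If [u' = j omega u] on [[-tau_max, tau_max]] then [u t = e^{j omega t} u 0]
   (the real and imaginary parts of [e^{-j omega t} u t] have zero derivative), so
   the boundary condition defining [D(L_xi)] becomes a linear system for [u 0],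
   and conversely every solution [v] of it yields the eigenfunction
   [e^{j omega t} v].  With [K = charmx A0 A tau (j omega)], invertible by
   stability, that system is a Hamiltonian pencil in [v = (x, y)] whose kernel
   corresponds to the [xi^2]-eigenvectors [z] of [G(j omega)^H G(j omega)]:
   [z] gives [x = K^{-1} B z], [y = K^{-H} C^T G z], and [(x, y)] gives back
   [z = - D_xi^{-1} (D^T C x + B^T y)]. *)

Section RotationODE.
Context {R : realType}.
Implicit Types (f a b : R -> R) (w t lo hi T : R).

Lemma is_derive_mull_id w t : is_derive t 1 (fun x => w * x) w.
Proof.
apply: is_derive_eq (is_deriveM (is_derive_cst w t 1) (is_derive_id t 1)) _.
by rewrite /GRing.scale /=; ring.
Qed.

Lemma is_derive_cos_mul w t :
  is_derive t 1 (fun x => cos (w * x)) (- (w * sin (w * t))).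
Proof.
apply: is_derive_eq (is_derive1_comp (is_derive_cos _) (is_derive_mull_id w t)) _.
by rewrite mulNr mulrC.
Qed.

Lemma is_derive_sin_mul w t :
  is_derive t 1 (fun x => sin (w * x)) (w * cos (w * t)).
Proof.
apply: is_derive_eq (is_derive1_comp (is_derive_sin _) (is_derive_mull_id w t)) _.
by rewrite mulrC.
Qed.

Lemma is_derive_continuous f t d : is_derive t 1 f d -> {for t, continuous f}.
Proof. by case=> /derivable1_diffP /differentiable_continuous. Qed.

Lemma is_derive_0_is_cst_itv f lo hi :
  {within `[lo, hi], continuous f} ->
  (forall x, lo < x < hi -> is_derive x 1 f 0) ->
  forall s t, lo <= s <= hi -> lo <= t <= hi -> f s = f t.
Proof.
move=> cf df s t.
wlog st : s t / s <= t.
  by move=> H hs ht; case: (leP s t) => [/H|/ltW /H] ->.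
move=> /andP[ls _] /andP[_ th].
have [] := @MVT_segment R f (fun=> 0) s t st.
- move=> x; rewrite in_itv /= => /andP[sx xt]; apply: df; apply/andP; split; lra.
- apply: continuous_subspaceW cf => x; rewrite /= !in_itv /= => /andP[sx xt].
  apply/andP; split; lra.
- by move=> c _; rewrite mul0r => /eqP; rewrite subr_eq0 => /eqP.
Qed.

(* [cos(wt) a + sin(wt) b] and [cos(wt) b - sin(wt) a] are first integrals. *)
Lemma rotation_ode_uniq {w T a b} :
  {within `[- T, T], continuous a} -> {within `[- T, T], continuous b} ->
  (forall t, - T < t < T ->
     is_derive t 1 a (- (w * b t)) /\ is_derive t 1 b (w * a t)) ->
  forall t, - T <= t <= T ->
    a t = cos (w * t) * a 0 - sin (w * t) * b 0 /\
    b t = sin (w * t) * a 0 + cos (w * t) * b 0.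
Proof.
move=> ca cb dab t tT.
have T0 : - T <= 0 <= T by case/andP: tT => ? ?; apply/andP; split; lra.
pose c x := cos (w * x); pose s x := sin (w * x).
have cc : {within `[- T, T], continuous c}.
  by apply: continuous_subspaceT => x; exact: is_derive_continuous (is_derive_cos_mul w x).
have cs : {within `[- T, T], continuous s}.
  by apply: continuous_subspaceT => x; exact: is_derive_continuous (is_derive_sin_mul w x).
pose p := c \* a + s \* b.
pose q := c \* b - s \* a.
have p_cst : p t = p 0.
  apply: (is_derive_0_is_cst_itv p _ _ _ _ _ _ tT T0).
    move=> x; apply: continuousD; apply: continuousM;
      [exact: cc | exact: ca | exact: cs | exact: cb].
  move=> x /dab[da db].
  apply: is_derive_eq (is_deriveD (is_deriveM (is_derive_cos_mul w x) da)
                                  (is_deriveM (is_derive_sin_mul w x) db)) _.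
  by rewrite /GRing.scale /=; ring.
have q_cst : q t = q 0.
  apply: (is_derive_0_is_cst_itv q _ _ _ _ _ _ tT T0).
    move=> x; apply: continuousB; apply: continuousM;
      [exact: cc | exact: cb | exact: cs | exact: ca].
  move=> x /dab[da db].
  apply: is_derive_eq (is_deriveB (is_deriveM (is_derive_cos_mul w x) db)
                                  (is_deriveM (is_derive_sin_mul w x) da)) _.
  by rewrite /GRing.scale /=; ring.
move: p_cst q_cst; rewrite /p /q /c /s !fctE /= mulr0 cos0 sin0.
rewrite !mul1r !mul0r addr0 subr0 => <- <-.
have e := cos2Dsin2 (w * t).
by split; [rewrite -{1}[a t]mul1r -e | rewrite -{1}[b t]mul1r -e]; ring.
Qed.

End RotationODE.

Section EntrywiseLimits.
Context {R : realFieldType}.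

Lemma cvg_mxP {T : Type} {F : set_system T} {FF : Filter F} {p q : nat}
    (f : T -> 'M[R]_(p, q)) (L : 'M[R]_(p, q)) :
  f @ F --> L <-> forall i j, (fun x => f x i j) @ F --> L i j.
Proof.
split=> [fL i j | fL].
  exact: (cvg_comp _ _ fL (@coord_continuous R _ _ i j L)).
apply/cvgrPdist_le => e e0; near=> x.
rewrite /Num.Def.normr /= mx_normrE (bigmax_le _ (ltW e0)) //= => ij _.
rewrite !mxE /=; move: ij; near: x; apply: filter_forall => ij.
exact: (cvgrPdist_le _ _).1 (fL ij.1 ij.2) e e0.
Unshelve. all: by end_near. Qed.

Lemma is_derive_quotientP (f : R -> R) (t d : R) :
  is_derive t 1 f d <-> (fun h => h^-1 * (f (t + h) - f t)) @ 0^' --> d.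
Proof.
have -> : (fun h : R => h^-1 * (f (t + h) - f t)) =
          (fun h => h^-1 *: ((f \o shift t) (h *: 1) - f t)).
  by apply/funext => h /=; rewrite [h *: 1]mulr1 [h + t]addrC.
split=> [[df <-] | fd]; first exact: df.
by apply: DeriveDef; [exact: cvgP fd | exact: cvg_lim fd].
Qed.

Lemma is_derive_within_quotient {lo hi t : R} (f : R -> R) (d : R) : lo < t < hi ->
  (fun h => h^-1 * (f (t + h) - f t)) @ within [set h | lo <= t + h <= hi] 0^' --> d ->
  is_derive t 1 f d.
Proof.
move=> /andP[lot thi] fd; apply/is_derive_quotientP => P /fd fP.
have e0 : 0 < Num.min (hi - t) (t - lo) by rewrite lt_min; apply/andP; split; lra.
have near_t : \forall h \near 0, lo <= t + h <= hi.
  near=> h.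
  have : `|h| < Num.min (hi - t) (t - lo) by near: h; exact: (@nbhs0_lt R R^o _ e0).
  by rewrite lt_min !ltr_norml => /andP[/andP[? ?] /andP[? ?]]; apply/andP; split; lra.
by apply: filterS2 (nbhs_dnbhs near_t) fP => h th /(_ th).
Unshelve. all: by end_near. Qed.

End EntrywiseLimits.

Section EntrywiseCalculus.
Context {R : realType} {k : nat}.
Implicit Types (u : R -> 'cV[R[i]]_k) (lo hi t : R).

Lemma cvRe_entry u i j : (fun t => cvRe (u t) i j) = (fun t => complex.Re (u t i j)).
Proof. by apply/funext => t; rewrite mxE. Qed.

Lemma cvIm_entry u i j : (fun t => cvIm (u t) i j) = (fun t => complex.Im (u t i j)).
Proof. by apply/funext => t; rewrite mxE. Qed.

Lemma cont_on_entry {lo hi u} i j : cont_on lo hi u ->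
  {within `[lo, hi], continuous (fun t => complex.Re (u t i j))} /\
  {within `[lo, hi], continuous (fun t => complex.Im (u t i j))}.
Proof.
case=> cre cim; rewrite -cvRe_entry -cvIm_entry; split=> x.
- exact: (cvg_mxP _ _).1 (cre x) i j.
- exact: (cvg_mxP _ _).1 (cim x) i j.
Qed.

Lemma deriv_on_entry {lo hi u} {u' : R -> 'cV[R[i]]_k} {t} i j :
  deriv_on lo hi u u' -> lo < t < hi ->
  is_derive t 1 (fun x => complex.Re (u x i j)) (complex.Re (u' t i j)) /\
  is_derive t 1 (fun x => complex.Im (u x i j)) (complex.Im (u' t i j)).
Proof.
move=> du tI; have /du[dre dim] : lo <= t <= hi.
  by case/andP: tI => ? ?; apply/andP; split; apply: ltW.
split; apply: (is_derive_within_quotient _ _ tI).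
- move/cvg_mxP/(_ i j): dre; rewrite mxE.
  rewrite (_ : (fun h => _) =
    fun h => h^-1 * (complex.Re (u (t + h) i j) - complex.Re (u t i j))) //.
  by apply/funext => h; rewrite !mxE.
- move/cvg_mxP/(_ i j): dim; rewrite mxE.
  rewrite (_ : (fun h => _) =
    fun h => h^-1 * (complex.Im (u (t + h) i j) - complex.Im (u t i j))) //.
  by apply/funext => h; rewrite !mxE.
Qed.

Definition is_derive_entries u (u' : R -> 'cV[R[i]]_k) := forall t i j,
  is_derive t 1 (fun x => complex.Re (u x i j)) (complex.Re (u' t i j)) /\
  is_derive t 1 (fun x => complex.Im (u x i j)) (complex.Im (u' t i j)).

Lemma is_derive_entries_cont_on lo hi u u' : is_derive_entries u u' -> cont_on lo hi u.
Proof.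
move=> du; split; apply: continuous_subspaceT => x; apply/cvg_mxP => i j;
  have [/is_derive_continuous dre /is_derive_continuous dim] := du x i j.
- by rewrite mxE; under eq_fun do rewrite mxE.
- by rewrite mxE; under eq_fun do rewrite mxE.
Qed.

Lemma is_derive_entries_deriv_on lo hi u u' : is_derive_entries u u' -> deriv_on lo hi u u'.
Proof.
move=> du t _; split; apply/cvg_mxP => i j; apply: cvg_within_filter;
  have [/is_derive_quotientP dre /is_derive_quotientP dim] := du t i j.
- by rewrite mxE; under eq_fun do rewrite !mxE.
- by rewrite mxE; under eq_fun do rewrite !mxE.
Qed.

End EntrywiseCalculus.

Section ImaginaryExponential.
Context {R : realType}.
Implicit Types (w t lo hi T : R).

Lemma cexp_imag t w : cexp (toC t * Complex 0 w) = Complex (cos (w * t)) (sin (w * t)).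
Proof. by rewrite /cexp /toC /= !mulr0 !mul0r subr0 addr0 expR0 !mul1r [t * w]mulrC. Qed.

Lemma cexp_imag0 w : cexp (toC 0 * Complex 0 w) = 1.
Proof. by rewrite cexp_imag mulr0 cos0 sin0. Qed.

Lemma imag_exp_ode_uniq {k} {u u' : R -> 'cV[R[i]]_k} {T w : R} :
  cont_on (- T) T u -> deriv_on (- T) T u u' ->
  (forall t, - T <= t <= T -> u' t = Complex 0 w *: u t) ->
  forall t, - T <= t <= T -> u t = cexp (toC t * Complex 0 w) *: u 0.
Proof.
move=> cu du u'E t tT; apply/matrixP => i j; rewrite mxE cexp_imag.
pose a x := complex.Re (u x i j); pose b x := complex.Im (u x i j).
have [ca cb] := cont_on_entry i j cu.
have dab x : - T < x < T -> is_derive x 1 a (- (w * b x)) /\ is_derive x 1 b (w * a x).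
  move=> xT; have [da db] := deriv_on_entry i j du xT.
  rewrite u'E ?mxE in da db; last by case/andP: xT => ? ?; apply/andP; split; apply: ltW.
  split; [apply: is_derive_eq da _ | apply: is_derive_eq db _];
    by rewrite /a /b; case: (u x i j) => p q /=; ring.
have [] := rotation_ode_uniq ca cb dab _ tT; rewrite /a /b.
case: (u t i j) => p1 q1; case: (u 0 i j) => p0 q0 /= -> ->.
by apply/eqP; rewrite eq_complex /=; apply/andP; split; apply/eqP; ring.
Qed.

Lemma imag_exp_solution {k} (v : 'cV[R[i]]_k) w lo hi :
  cont_on lo hi (fun t => cexp (toC t * Complex 0 w) *: v) /\
  deriv_on lo hi (fun t => cexp (toC t * Complex 0 w) *: v)
                 (fun t => Complex 0 w *: (cexp (toC t * Complex 0 w) *: v)).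
Proof.
pose u t := cexp (toC t * Complex 0 w) *: v.
suff du : is_derive_entries u (fun t => Complex 0 w *: u t).
  by split; [exact: is_derive_entries_cont_on du | exact: is_derive_entries_deriv_on du].
move=> t i j.
have -> : (fun x => complex.Re (u x i j)) =
          fun x => cos (w * x) * complex.Re (v i j) - sin (w * x) * complex.Im (v i j).
  by apply/funext => x; rewrite mxE cexp_imag; case: (v i j).
have -> : (fun x => complex.Im (u x i j)) =
          fun x => sin (w * x) * complex.Re (v i j) + cos (w * x) * complex.Im (v i j).
  by apply/funext => x; rewrite mxE cexp_imag; case: (v i j) => p q /=; ring.
rewrite !mxE cexp_imag; case: (v i j) => p q /=; split.
- apply: is_derive_eq (is_deriveB (is_deriveM (is_derive_cos_mul w t) (is_derive_cst p t 1))
                                  (is_deriveM (is_derive_sin_mul w t) (is_derive_cst q t 1))) _.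
  by rewrite /GRing.scale /=; ring.
- apply: is_derive_eq (is_deriveD (is_deriveM (is_derive_sin_mul w t) (is_derive_cst p t 1))
                                  (is_deriveM (is_derive_cos_mul w t) (is_derive_cst q t 1))) _.
  by rewrite /GRing.scale /=; ring.
Qed.

End ImaginaryExponential.

Lemma unitmx_mul_sub_scalarC (F : fieldType) p q (X : 'M[F]_(p, q)) (Y : 'M[F]_(q, p)) c :
  c != 0 -> Y *m X - c%:M \in unitmx -> X *m Y - c%:M \in unitmx.
Proof.
move=> c0 YX_unit; rewrite -row_free_unit; apply: inj_row_free => u.
rewrite mulmxBr mul_mx_scalar => /eqP; rewrite subr_eq0 => /eqP uXY.
have uX0 : u *m X = 0.
  rewrite -(mulmxK YX_unit (u *m X)) mulmxBr mul_mx_scalar mulmxA -(mulmxA u) uXY.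
  by rewrite -scalemxAl subrr mul0mx.
by apply: (scalerI c0); rewrite scaler0 -uXY mulmxA uX0 mul0mx.
Qed.

Lemma summx_block (V : zmodType) (I : Type) (r : seq I) (P : pred I) m1 m2 n1 n2
    (F1 : I -> 'M[V]_(m1, n1)) (F2 : I -> 'M[V]_(m1, n2))
    (F3 : I -> 'M[V]_(m2, n1)) (F4 : I -> 'M[V]_(m2, n2)) :
  \sum_(i <- r | P i) block_mx (F1 i) (F2 i) (F3 i) (F4 i) =
  block_mx (\sum_(i <- r | P i) F1 i) (\sum_(i <- r | P i) F2 i)
           (\sum_(i <- r | P i) F3 i) (\sum_(i <- r | P i) F4 i).
Proof.
elim: r => [|x r IH]; first by rewrite !big_nil block_mx0.
by rewrite !big_cons; case: (P x); rewrite // IH add_block_mx.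
Qed.

Section HamiltonianPencil.
Context {F : fieldType} {n nu ny : nat}.
Variables (K Kh : 'M[F]_n).
Variables (B : 'M[F]_(n, nu)) (Bt : 'M[F]_(nu, n)) (C : 'M[F]_(ny, n)) (Ct : 'M[F]_(n, ny)).
Variables (D : 'M[F]_(ny, nu)) (Dt : 'M[F]_(nu, ny)) (c : F).

Local Notation Dx := (Dt *m D - c%:M).
Local Notation tD := (D *m Dt - c%:M).

Definition hamiltonian_pencil : 'M[F]_(n + n) :=
  block_mx (K + B *m invmx Dx *m Dt *m C) (B *m invmx Dx *m Bt)
           (- (c *: (Ct *m invmx tD *m C))) (- (Kh + Ct *m D *m invmx Dx *m Bt)).

Hypotheses (K_unit : K \in unitmx) (Kh_unit : Kh \in unitmx).
Hypotheses (Dx_unit : Dx \in unitmx) (tD_unit : tD \in unitmx).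

Lemma invmx_push_through : D *m invmx Dx = invmx tD *m D.
Proof.
have tDD : tD *m D = D *m Dx by rewrite mulmxBl mulmxBr mul_scalar_mx mul_mx_scalar !mulmxA.
by rewrite -{1}(mulKmx tD_unit D) tDD mulmxA mulmxK.
Qed.

Lemma invmx_push_through_mul : D *m invmx Dx *m Dt = 1%:M + c *: invmx tD.
Proof.
rewrite invmx_push_through -mulmxA; apply/eqP.
by rewrite -subr_eq -mul_mx_scalar -mulmxBr mulVmx.
Qed.

Lemma hamiltonian_pencil_col {x y : 'cV[F]_n} {z : 'cV[F]_nu} :
  Dx *m z = - (Dt *m (C *m x) + Bt *m y) ->
  hamiltonian_pencil *m col_mx x y =
  col_mx (K *m x - B *m z) (Ct *m (C *m x + D *m z) - Kh *m y).
Proof.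
move=> Dxz; rewrite mul_block_col; congr col_mx.
  rewrite mulmxDl -!mulmxA -addrA -mulmxDr -!mulmxDr.
  by rewrite -[Dt *m (C *m x) + _]opprK -Dxz !mulmxN mulKmx.
have Bty : Bt *m y = - (Dx *m z) - Dt *m (C *m x) by rewrite Dxz opprK addrC addKr.
have DDx : Ct *m D *m invmx Dx *m Bt *m y =
    - (Ct *m (C *m x + D *m z)) - c *: (Ct *m invmx tD *m C *m x).
  rewrite -!mulmxA Bty mulmxBr mulmxN mulKmx // mulmxBr.
  rewrite [D *m (invmx Dx *m _)]mulmxA [D *m invmx Dx *m _]mulmxA.
  rewrite invmx_push_through_mul mulmxDl mul1mx -scalemxAl.
  rewrite !(mulmxN, mulmxDr, mulmxBr, scalemxAr).
  by apply/matrixP => i j; rewrite !mxE; ring.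
rewrite !mulNmx mulmxDl DDx -scalemxAl.
by apply/matrixP => i j; rewrite !mxE; ring.
Qed.

Lemma hamiltonian_pencilP :
  (exists2 z : 'cV[F]_nu, z != 0 &
     (Bt *m invmx Kh *m Ct + Dt) *m ((C *m invmx K *m B + D) *m z) = c *: z) <->
  (exists2 v : 'cV[F]_(n + n), v != 0 & hamiltonian_pencil *m v = 0).
Proof.
split=> [[z z0 Gz] | [v v0 Hv]].
  pose x := invmx K *m (B *m z).
  have Gz_x : (C *m invmx K *m B + D) *m z = C *m x + D *m z by rewrite mulmxDl !mulmxA.
  pose y := invmx Kh *m (Ct *m (C *m x + D *m z)).
  have Dxz : Dx *m z = - (Dt *m (C *m x) + Bt *m y).
    have Bty : Bt *m y = c *: z - Dt *m (C *m x + D *m z).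
      by rewrite -Gz Gz_x mulmxDl -!mulmxA addrK.
    rewrite Bty mulmxBl mul_scalar_mx mulmxDr [Dt *m (D *m z)]mulmxA.
    by apply/matrixP => i j; rewrite !mxE; ring.
  exists (col_mx x y).
    apply: contraNneq z0 => /eqP; rewrite col_mx_eq0 => /andP[/eqP x0 /eqP y0].
    by rewrite -(mulKmx Dx_unit z) Dxz x0 y0 !mulmx0 addr0 oppr0 mulmx0.
  by rewrite (hamiltonian_pencil_col Dxz) mulKVmx // mulKVmx // !subrr col_mx0.
rewrite -[v]vsubmxK in v0 Hv; move: (usubmx v) (dsubmx v) v0 Hv => x y xy0.
pose z := - (invmx Dx *m (Dt *m (C *m x) + Bt *m y)).
have Dxz : Dx *m z = - (Dt *m (C *m x) + Bt *m y) by rewrite mulmxN mulKVmx.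
rewrite (hamiltonian_pencil_col Dxz) -col_mx0 => /eq_col_mx[/eqP + /eqP].
rewrite !subr_eq0 => /eqP Kx /eqP Khy.
have x_z : x = invmx K *m (B *m z) by rewrite -Kx mulKmx.
have y_z : y = invmx Kh *m (Ct *m (C *m x + D *m z)) by rewrite Khy mulKmx.
exists z.
  apply: contraNneq xy0 => z0.
  by rewrite y_z x_z z0 !mulmx0 addr0 !mulmx0 col_mx0.
have Gz : (C *m invmx K *m B + D) *m z = C *m x + D *m z by rewrite mulmxDl x_z !mulmxA.
have Bty : Bt *m y = - (Dx *m z) - Dt *m (C *m x) by rewrite Dxz opprK addrC addKr.
rewrite Gz mulmxDl -!mulmxA -y_z Bty mulmxDr mulmxBl mul_scalar_mx [Dt *m (D *m z)]mulmxA.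
by apply/matrixP => i j; rewrite !mxE; ring.
Qed.

End HamiltonianPencil.

Arguments hamiltonian_pencilP {F n nu ny K Kh B Bt C Ct D Dt c}.

Section ComplexMatrices.
Context {R : realType}.

Lemma mxCE p q (M : 'M[R]_(p, q)) : mxC M = map_mx (real_complex R) M.
Proof. by []. Qed.

Lemma real_complexE (r : R) : real_complex R r = toC r.
Proof. by []. Qed.

Lemma toCN (r : R) : toC (- r) = - toC r.
Proof. by rewrite -!real_complexE rmorphN. Qed.

Lemma ctrmxK p q (M : 'M[R[i]]_(p, q)) : ctrmx (ctrmx M) = M.
Proof. by apply/matrixP => i j; rewrite !mxE conjcK. Qed.

Lemma ctrmxM p q r (M : 'M[R[i]]_(p, q)) (N : 'M[R[i]]_(q, r)) :
  ctrmx (M *m N) = ctrmx N *m ctrmx M.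
Proof. by rewrite /ctrmx map_mxM trmx_mul. Qed.

Lemma ctrmxD p q (M N : 'M[R[i]]_(p, q)) : ctrmx (M + N) = ctrmx M + ctrmx N.
Proof. by rewrite /ctrmx map_mxD linearD. Qed.

Lemma ctrmxB p q (M N : 'M[R[i]]_(p, q)) : ctrmx (M - N) = ctrmx M - ctrmx N.
Proof. by rewrite /ctrmx map_mxB linearB. Qed.

Lemma ctrmxZ p q a (M : 'M[R[i]]_(p, q)) : ctrmx (a *: M) = conjc a *: ctrmx M.
Proof. by rewrite /ctrmx map_mxZ linearZ. Qed.

Lemma ctrmx_sum p q (I : finType) (F : I -> 'M[R[i]]_(p, q)) :
  ctrmx (\sum_i F i) = \sum_i ctrmx (F i).
Proof. by rewrite /ctrmx raddf_sum linear_sum. Qed.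

Lemma ctrmx_scalar p (a : R[i]) : ctrmx (a%:M : 'M[R[i]]_p) = (conjc a)%:M.
Proof. by rewrite /ctrmx map_scalar_mx tr_scalar_mx. Qed.

Lemma ctrmx_inv p (M : 'M[R[i]]_p) : ctrmx (invmx M) = invmx (ctrmx M).
Proof. by rewrite /ctrmx map_invmx trmx_inv. Qed.

Lemma ctrmx_unit p (M : 'M[R[i]]_p) : (ctrmx M \in unitmx) = (M \in unitmx).
Proof. by rewrite /ctrmx unitmx_tr map_unitmx. Qed.

Lemma ctrmx_eq0 p q (M : 'M[R[i]]_(p, q)) : (ctrmx M == 0) = (M == 0).
Proof.
apply/eqP/eqP => [M0|->]; last by apply/matrixP => i j; rewrite !mxE conjc0.
by rewrite -[M]ctrmxK M0; apply/matrixP => i j; rewrite !mxE conjc0.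
Qed.

Lemma conj_toC (r : R) : conjc (toC r) = toC r.
Proof. by apply/eqP; rewrite eq_complex /= oppr0 !eqxx. Qed.

Lemma ctrmx_mxC p q (M : 'M[R]_(p, q)) : ctrmx (mxC M) = mxC M^T.
Proof. by apply/matrixP => i j; rewrite !mxE conj_toC. Qed.

Lemma conj_cexp (z : R[i]) : conjc (cexp z) = cexp (conjc z).
Proof. by case: z => a b; rewrite /cexp /= cosN sinN mulrN. Qed.

Lemma has_singular_valueP {p q} (M : 'M[R[i]]_(p, q)) {sigma : R} : 0 <= sigma ->
  has_singular_value M sigma <->
  exists2 z : 'cV_q, z != 0 & ctrmx M *m (M *m z) = toC (sigma ^+ 2) *: z.
Proof.
move=> sigma_ge0; rewrite /has_singular_value.
have MhM_herm : ctrmx (ctrmx M *m M) = ctrmx M *m M by rewrite ctrmxM ctrmxK.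
split=> [[_ /eigenvalueP[z Mz z0]] | [z z0 Mz]].
  exists (ctrmx z); first by rewrite ctrmx_eq0.
  by rewrite mulmxA -MhM_herm -ctrmxM Mz ctrmxZ conj_toC.
split=> //; apply/eigenvalueP; exists (ctrmx z); last by rewrite ctrmx_eq0.
by rewrite -{1}MhM_herm -ctrmxM -mulmxA Mz ctrmxZ conj_toC.
Qed.

End ComplexMatrices.

Section DelaySystem.
Context {R : realType} {n m nu ny : nat}.
Variables (A0 : 'M[R]_n) (A : 'I_m -> 'M[R]_n).
Variables (B : 'M[R]_(n, nu)) (C : 'M[R]_(ny, n)) (D : 'M[R]_(ny, nu)).
Variables (tau : 'I_m -> R) (xi : R).

Definition hamiltonian_delay (lam : R[i]) : 'M[R[i]]_(n + n) :=
  mxC (Mzero A0 B C D xi) +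
  \sum_i (cexp (toC (- tau i) * lam) *: mxC (Mplus (A i)) +
          cexp (toC (tau i) * lam) *: mxC (Mminus (A i))).

Lemma hamiltonian_delay_mulmx lam (v : 'cV[R[i]]_(n + n)) :
  mxC (Mzero A0 B C D xi) *m v +
  \sum_i (mxC (Mplus (A i)) *m (cexp (toC (- tau i) * lam) *: v) +
          mxC (Mminus (A i)) *m (cexp (toC (tau i) * lam) *: v)) =
  hamiltonian_delay lam *m v.
Proof.
rewrite /hamiltonian_delay mulmxDl mulmx_suml; congr (_ + _).
by apply: eq_bigr => i _; rewrite mulmxDl -!scalemxAl -!scalemxAr.
Qed.

Lemma eigenvalue_L_imagP w : (forall i, 0 <= tau i) ->
  eigenvalue_L A0 A tau B C D xi (Complex 0 w) <->
  exists2 v : 'cV_(n + n), v != 0 &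
    ((Complex 0 w)%:M - hamiltonian_delay (Complex 0 w)) *m v = 0.
Proof.
move=> tau_ge0; rewrite /eigenvalue_L /in_dom_L; set T := tau_max tau.
have T_ge0 : 0 <= T by exact: bigmax_ge_id.
have T0 : - T <= 0 <= T by rewrite oppr_le0 T_ge0.
have tauT i : - T <= - tau i <= T /\ - T <= tau i <= T.
  have : tau i <= T by exact: le_bigmax.
  by have := tau_ge0 i; split; apply/andP; split; lra.
have kerE v : (((Complex 0 w)%:M - hamiltonian_delay (Complex 0 w)) *m v = 0) <->
               (Complex 0 w *: v = hamiltonian_delay (Complex 0 w) *m v).
  by rewrite mulmxBl mul_scalar_mx; split=> [/eqP | ->]; rewrite ?subrr // subr_eq0 => /eqP.
split=> [[u [u' [[cu du _ bc] [t [tT ut0]] u'E]]] | [v v0 /kerE Hv]].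
  have u_exp := imag_exp_ode_uniq cu du u'E.
  exists (u 0); first by apply: contraNneq ut0 => u00; rewrite (u_exp _ tT) u00 scaler0.
  apply/kerE; rewrite -hamiltonian_delay_mulmx -(u'E 0 T0) bc; congr (_ + _).
  apply: eq_bigr => i _; have [tau_in tau_in'] := tauT i.
  by rewrite (u_exp _ tau_in) (u_exp _ tau_in').
pose u t := cexp (toC t * Complex 0 w) *: v.
have [cu du] := imag_exp_solution v w (- T) T.
have [cu' _] := imag_exp_solution (Complex 0 w *: v) w (- T) T.
exists u, (fun t => Complex 0 w *: u t); split.
- split; [exact: cu | exact: du | |].
    rewrite (_ : (fun t => _) = fun t => cexp (toC t * Complex 0 w) *: (Complex 0 w *: v)) //.
    by apply/funext => t; rewrite /u !scalerA mulrC.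
  by rewrite /u cexp_imag0 scale1r hamiltonian_delay_mulmx -Hv.
- by exists 0; split; rewrite // /u cexp_imag0 scale1r.
- by [].
Qed.

Lemma mxC_Dxi : mxC (Dxi D xi) = mxC D^T *m mxC D - (toC (xi ^+ 2))%:M.
Proof. by rewrite !mxCE map_mxB map_mxM map_scalar_mx. Qed.

Lemma mxC_tDxi : mxC (tDxi D xi) = mxC D *m mxC D^T - (toC (xi ^+ 2))%:M.
Proof. by rewrite !mxCE map_mxB map_mxM map_scalar_mx. Qed.

Lemma transfer_ctrmx lam : ctrmx (transfer A0 A tau B C D lam) =
  mxC B^T *m invmx (ctrmx (charmx A0 A tau lam)) *m mxC C^T + mxC D^T.
Proof. by rewrite /transfer ctrmxD !ctrmxM ctrmx_inv !ctrmx_mxC mulmxA. Qed.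

Lemma ctrmx_charmx_imag w : ctrmx (charmx A0 A tau (Complex 0 w)) =
  - (Complex 0 w)%:M - mxC A0^T - \sum_i cexp (toC (tau i) * Complex 0 w) *: mxC (A i)^T.
Proof.
rewrite /charmx !ctrmxB ctrmx_scalar ctrmx_mxC ctrmx_sum.
have -> : conjc (Complex 0 w) = - Complex 0 w by apply/eqP; rewrite eq_complex /= oppr0 !eqxx.
congr (_ - _ - _); first by rewrite raddfN.
apply: eq_bigr => i _; rewrite ctrmxZ ctrmx_mxC conj_cexp.
by congr (cexp _ *: _); apply/eqP; rewrite eq_complex /=; apply/andP; split; apply/eqP; ring.
Qed.

Lemma hamiltonian_delay_pencil w :
  (Complex 0 w)%:M - hamiltonian_delay (Complex 0 w) =
  hamiltonian_pencil (charmx A0 A tau (Complex 0 w)) (ctrmx (charmx A0 A tau (Complex 0 w)))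
    (mxC B) (mxC B^T) (mxC C) (mxC C^T) (mxC D) (mxC D^T) (toC (xi ^+ 2)).
Proof.
rewrite ctrmx_charmx_imag /hamiltonian_delay /hamiltonian_pencil /Mzero /Mplus /Mminus.
rewrite -mxC_Dxi -mxC_tDxi.
under eq_bigr do
  rewrite !mxCE !map_block_mx !map_mx0 !scale_block_mx !scaler0 add_block_mx addr0 add0r.
rewrite summx_block !big1_eq !mxCE !map_block_mx add_block_mx !addr0 scalar_mx_block.
rewrite opp_block_mx add_block_mx !add0r.
rewrite !(map_mxB, map_mxD, map_mxN, map_mxM, map_mxZ, map_invmx) -!mxCE.
(* The lower-left blocks already coincide. *)
congr block_mx.
- under eq_bigr do rewrite -mxCE toCN.
  by rewrite /charmx; apply/matrixP => i j; rewrite !mxE; ring.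
- by rewrite opprK.
- under eq_bigr do rewrite add0r map_mxN scalerN -mxCE.
  by rewrite sumrN; apply/matrixP => i j; rewrite !mxE; ring.
Qed.

End DelaySystem.

Theorem theorem1 (R : realType) (n m nu ny : nat)
  (A0 : 'M[R]_n) (A : 'I_m -> 'M[R]_n) (B : 'M[R]_(n, nu))
  (C : 'M[R]_(ny, n)) (D : 'M[R]_(ny, nu)) (tau : 'I_m -> R) :
  (0 < n)%N -> (0 < m)%N -> (0 < nu)%N -> (0 < ny)%N ->
  (forall i, 0 <= tau i) ->
  (* stability: every characteristic root has negative real part *)
  (forall s : R[i], \det (charmx A0 A tau s) = 0 -> complex.Re s < 0) ->
  forall xi : R, 0 < xi -> Dxi D xi \in unitmx ->
  forall omega : R, 0 <= omega ->
    has_singular_value (transfer A0 A tau B C D (Complex 0 omega)) xi <->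
    eigenvalue_L A0 A tau B C D xi (Complex 0 omega).
Proof.
move=> _ _ _ _ tau_ge0 stable xi xi_gt0 Dxi_unit omega _.
set K := charmx A0 A tau (Complex 0 omega).
have K_unit : K \in unitmx by rewrite unitmxE unitfE; apply/eqP => /stable; rewrite ltxx.
have Kh_unit : ctrmx K \in unitmx by rewrite ctrmx_unit.
have Dx_unit : mxC D^T *m mxC D - (toC (xi ^+ 2))%:M \in unitmx.
  by rewrite -mxC_Dxi mxCE map_unitmx.
have tD_unit : mxC D *m mxC D^T - (toC (xi ^+ 2))%:M \in unitmx.
  rewrite -mxC_tDxi mxCE map_unitmx.
  by apply: unitmx_mul_sub_scalarC Dxi_unit; rewrite expf_neq0 // gt_eqF.
apply: (iff_trans (has_singular_valueP _ (ltW xi_gt0))); rewrite transfer_ctrmx.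
apply: (iff_trans (hamiltonian_pencilP K_unit Kh_unit Dx_unit tD_unit)).
rewrite -hamiltonian_delay_pencil; apply: iff_sym.
exact: eigenvalue_L_imagP.
Qed.
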